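(* Let $m>n$ be positive integers, $\lambda\in X$, $\Lambda=x(\lambda)$, and $\alpha=\epsilon_i-\delta_j$ with $i\in[n]$, $j\in[m]$. Then: (a) if $\lambda\in X_\alpha$ then $\Lambda\in\Pi_\alpha$; (b) if $\lambda\in X_{-\alpha}$ then $\Lambda\in\Pi_{-\alpha}$; (c) if $\lambda\in X_{\pm\alpha}$ then $x(t_{\pm\alpha}(\lambda))=\tau_{\pm\alpha}(\Lambda)$.
   Context: $X$ is the set of partitions $\lambda=(\lambda_1\ge\dots\ge\lambda_n\ge0)$ with $\lambda_1\le m$, drawn in an $n\times m$ rectangle with rows $\epsilon_1,\dots,\epsilon_n$ top to bottom and columns $\delta_1,\dots,\delta_m$; the diagram consists of boxes $\epsilon_i-\delta_j$ with $j\le\lambda_{n+1-i}$; $\lambda'_j=\#\{i:\lambda_i\ge j\}$. $X_\alpha$ (resp. $X_{-\alpha}$) is the set of $\lambda$ for which box $\alpha$ is an outer (resp. inner) corner; $t_\alpha$ adds, $t_{-\alpha}$ removes this box. Elements of $\mathbb Z^{n|m}$ are $(a_1,\dots,a_n|b_1,\dots,b_m)$; $x(\lambda)$ has $a_i=m(n-i)+n\lambda_{n+1-i}$, $b_j=n(j-1)+m\lambda'_j$. $\Pi_\alpha=\{a_i=b_j\}$, $\Pi_{-\alpha}=\{a_i-b_j=n-m\}$, $\tau_\alpha(\Lambda)$ adds $n$ to $a_i$ and $m$ to $b_j$, and $\tau_{-\alpha}=\tau_\alpha^{-1}$ subtracts them. *)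

From mathcomp Require Import all_boot all_order all_algebra.

Import GRing.Theory Num.Theory.
Local Open Scope ring_scope.

(* Conventions (0-based indices via ordinals):
   - a partition lam : {ffun 'I_n -> nat}, with  lam k = lambda_{k+1};
   - row i : 'I_n stands for epsilon_{i+1}; column j : 'I_m for delta_{j+1};
   - the box alpha = epsilon_{i+1} - delta_{j+1} is encoded by the pair (i, j). *)

Definition part (n : nat) := {ffun 'I_n -> nat}.

Definition inX (n m : nat) (lam : part n) : Prop :=
  (forall k l : 'I_n, (k <= l)%N -> (lam l <= lam k)%N) /\
  (forall k : 'I_n, (lam k <= m)%N).

(* length of row epsilon_{i+1} = lambda_{n+1-(i+1)} = lam (n-1-i) *)
Definition rowlen (n : nat) (lam : part n) (i : 'I_n) : nat := lam (rev_ord i).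

Definition in_diagram (n m : nat) (lam : part n) (i : 'I_n) (j : 'I_m) : bool :=
  (j < rowlen n lam i)%N.

(* lambda'_c = #{k : lambda_k >= c} (c is a 1-based column number) *)
Definition conjp (n : nat) (lam : part n) (c : nat) : nat :=
  #|[set k : 'I_n | (c <= lam k)%N]|.

Definition t_add (n m : nat) (i : 'I_n) (j : 'I_m) (lam : part n) : part n :=
  [ffun k => if k == rev_ord i then (lam k).+1 else lam k].
Definition t_rem (n m : nat) (i : 'I_n) (j : 'I_m) (lam : part n) : part n :=
  [ffun k => if k == rev_ord i then (lam k).-1 else lam k].

(* X_alpha : alpha is an outer corner: alpha is not in the diagram, it is the
   first empty box of its row, and adding it yields again a partition in X *)
Definition inXalpha (n m : nat) (i : 'I_n) (j : 'I_m) (lam : part n) : Prop :=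
  ~~ in_diagram n m lam i j /\ rowlen n lam i = j /\ inX n m (t_add n m i j lam).
(* X_{-alpha} : alpha is an inner corner: alpha is in the diagram, it is the
   last box of its row, and removing it yields again a partition in X *)
Definition inXmalpha (n m : nat) (i : 'I_n) (j : 'I_m) (lam : part n) : Prop :=
  in_diagram n m lam i j /\ rowlen n lam i = j.+1 /\ inX n m (t_rem n m i j lam).

Definition Zvec (n m : nat) := ({ffun 'I_n -> int} * {ffun 'I_m -> int})%type.

(* x(lambda): a_{i+1} = m(n-(i+1)) + n lambda_{n-i},
              b_{j+1} = n j + m lambda'_{j+1} *)
Definition xmap (n m : nat) (lam : part n) : Zvec n m :=
  ([ffun i : 'I_n => ((m * (n - i.+1) + n * rowlen n lam i)%N)%:Z],
   [ffun j : 'I_m => ((n * j + m * conjp n lam j.+1)%N)%:Z]).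

Definition inPi (n m : nat) (i : 'I_n) (j : 'I_m) (L : Zvec n m) : Prop :=
  L.1 i = L.2 j.
Definition inPim (n m : nat) (i : 'I_n) (j : 'I_m) (L : Zvec n m) : Prop :=
  (L.1 i - L.2 j = n%:Z - m%:Z)%R.

Definition tau_add (n m : nat) (i : 'I_n) (j : 'I_m) (L : Zvec n m) : Zvec n m :=
  ([ffun k => if k == i then (L.1 k + n%:Z)%R else L.1 k],
   [ffun l => if l == j then (L.2 l + m%:Z)%R else L.2 l]).
Definition tau_rem (n m : nat) (i : 'I_n) (j : 'I_m) (L : Zvec n m) : Zvec n m :=
  ([ffun k => if k == i then (L.1 k - n%:Z)%R else L.1 k],
   [ffun l => if l == j then (L.2 l - m%:Z)%R else L.2 l]).

From mathcomp Require Import all_boot all_order all_algebra zify.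

Set Implicit Arguments.
Unset Strict Implicit.
Unset Printing Implicit Defensive.

Import GRing.Theory.

(* Write r for the entry of [lam] holding the length of row i.  If the box
   alpha = (i, j) is an outer corner then lam r = j, the rows above have length
   > j and those below length <= j, so lambda'_(j+1) = r = n - 1 - i and both
   coordinates a_i, b_j of x(lambda) equal m r + n j.  Adding the box raises
   row i by one and column j by one, hence a_i by n and b_j by m, and nothing
   else.  The inner-corner case is the outer-corner case for t_{-alpha} lambda,
   read backwards. *)

Lemma card_ord_lt (n p : nat) : (p <= n)%N -> #|[set k : 'I_n | (k < p)%N]| = p.
Proof.
move=> le_pn.
have -> : [set k : 'I_n | (k < p)%N] = widen_ord le_pn @: [set: 'I_p].
  apply/setP => k; rewrite inE; apply/idP/imsetP => [lt_kp|[l _ ->]].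
    by exists (Ordinal lt_kp); rewrite ?inE //; apply: val_inj.
  by rewrite /= ltn_ord.
by rewrite card_imset ?cardsT ?card_ord // => x y [] /val_inj.
Qed.

Section AddBox.

Variables (n m : nat) (i : 'I_n) (j : 'I_m).
Implicit Types lam : part n.

Lemma conjp_threshold lam c p :
  (p <= n)%N -> (forall k : 'I_n, (c <= lam k)%N = (k < p)%N) -> conjp n lam c = p.
Proof.
move=> le_pn lamP; rewrite /conjp -(card_ord_lt le_pn).
by apply: eq_card => k; rewrite !inE lamP.
Qed.

Lemma rowlen_t_add lam k :
  rowlen n (t_add n m i j lam) k = (rowlen n lam k + (k == i))%N.
Proof.
by rewrite /rowlen ffunE (inj_eq rev_ord_inj); case: (k == i); rewrite ?addn1 ?addn0.
Qed.

(* Only the entry of row i changes, and it crosses the level c exactly when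
   c is the new length of that row. *)
Lemma conjp_t_add lam c :
  conjp n (t_add n m i j lam) c = (conjp n lam c + (c == (rowlen n lam i).+1))%N.
Proof.
rewrite /conjp (cardsD1 (rev_ord i)) [in RHS](cardsD1 (rev_ord i)) !inE ffunE eqxx.
have -> : [set k | (c <= t_add n m i j lam k)%N] :\ rev_ord i
        = [set k | (c <= lam k)%N] :\ rev_ord i.
  by apply/setP => k; rewrite !inE ffunE; case: eqP.
by rewrite /rowlen; move: (lam _) #|_| => v s; lia.
Qed.

Lemma conjp_outer_corner lam :
  inX n m lam -> inXalpha n m i j lam -> conjp n lam j.+1 = rev_ord i.
Proof.
move=> [lam_mono _] [_ [row_ij [tlam_mono _]]].
apply: conjp_threshold => [|k]; first exact: ltnW.
rewrite /rowlen in row_ij.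
case: (ltnP k (rev_ord i)) => [lt_ki|le_ik].
- have := tlam_mono k (rev_ord i) (ltnW lt_ki); rewrite !ffunE eqxx row_ij.
  by rewrite ifN // neq_ltn lt_ki.
- by apply/negbTE; rewrite -ltnNge ltnS -row_ij lam_mono.
Qed.

Lemma xmap_outer_corner lam :
  inX n m lam -> inXalpha n m i j lam -> inPi n m i j (xmap n m lam).
Proof.
move=> lamX add_ij; rewrite /inPi !ffunE conjp_outer_corner // (proj1 (proj2 add_ij)) /=.
by rewrite addnC mulnC.
Qed.

Lemma xmap_t_add lam :
  inX n m lam -> inXalpha n m i j lam ->
  xmap n m (t_add n m i j lam) = tau_add n m i j (xmap n m lam).
Proof.
move=> lamX add_ij; have row_ij := proj1 (proj2 add_ij).
congr pair; apply/ffunP => k; rewrite !ffunE.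
- by rewrite rowlen_t_add; case: (k == i); rewrite /= ?addn0 ?addn1 ?mulnSr ?addnA ?PoszD.
- rewrite conjp_t_add row_ij -[_ == j.+1]/(k == j).
  case: eqVneq => [->|_]; last by rewrite addn0.
  by rewrite conjp_outer_corner // addn1 mulnSr addnA PoszD.
Qed.

End AddBox.

Section RemoveBox.

Variables (n m : nat) (i : 'I_n) (j : 'I_m).
Implicit Types (lam : part n) (L : Zvec n m).

Lemma t_rem_inner_corner lam :
  inXmalpha n m i j lam -> t_add n m i j (t_rem n m i j lam) = lam.
Proof.
move=> [_ [row_ij _]]; apply/ffunP => k; rewrite !ffunE.
by case: eqVneq => [->|//]; rewrite -[lam _]/(rowlen n lam i) row_ij.
Qed.

Lemma outer_corner_t_rem lam :
  inX n m lam -> inXmalpha n m i j lam -> inXalpha n m i j (t_rem n m i j lam).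
Proof.
move=> lamX rem_ij; have [_ [row_ij _]] := rem_ij.
have row_ij' : rowlen n (t_rem n m i j lam) i = j.
  by rewrite /rowlen ffunE eqxx -/(rowlen n lam i) row_ij.
by split; [rewrite /in_diagram row_ij' ltnn | split; rewrite // t_rem_inner_corner].
Qed.

Lemma tau_addK : cancel (tau_add n m i j) (tau_rem n m i j).
Proof.
move=> [a b]; congr pair; apply/ffunP => k; rewrite !ffunE;
  by case: eqP => //= _; rewrite addrK.
Qed.

Lemma inPim_tau_add L : inPi n m i j L -> inPim n m i j (tau_add n m i j L).
Proof. by rewrite /inPi /inPim !ffunE !eqxx => ->; rewrite opprD addrACA subrr add0r. Qed.

Lemma xmap_inner_corner_tau_add lam :
  inX n m lam -> inXmalpha n m i j lam ->
  xmap n m lam = tau_add n m i j (xmap n m (t_rem n m i j lam)).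
Proof.
move=> lamX rem_ij; have [_ [_ muX]] := rem_ij.
rewrite -{1}(t_rem_inner_corner rem_ij) xmap_t_add //; exact: outer_corner_t_rem.
Qed.

Lemma xmap_inner_corner lam :
  inX n m lam -> inXmalpha n m i j lam -> inPim n m i j (xmap n m lam).
Proof.
move=> lamX rem_ij; have [_ [_ muX]] := rem_ij.
rewrite xmap_inner_corner_tau_add //; apply/inPim_tau_add/xmap_outer_corner => //.
exact: outer_corner_t_rem.
Qed.

Lemma xmap_t_rem lam :
  inX n m lam -> inXmalpha n m i j lam ->
  xmap n m (t_rem n m i j lam) = tau_rem n m i j (xmap n m lam).
Proof. by move=> lamX rem_ij; rewrite (xmap_inner_corner_tau_add lamX rem_ij) tau_addK. Qed.

End RemoveBox.

Theorem lemma4p3 (n m : nat) (hn : (0 < n)%N) (hnm : (n < m)%N)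
  (lam : part n) (hlam : inX n m lam) (i : 'I_n) (j : 'I_m) :
  (inXalpha n m i j lam -> inPi n m i j (xmap n m lam)) /\
  (inXmalpha n m i j lam -> inPim n m i j (xmap n m lam)) /\
  (inXalpha n m i j lam ->
     xmap n m (t_add n m i j lam) = tau_add n m i j (xmap n m lam)) /\
  (inXmalpha n m i j lam ->
     xmap n m (t_rem n m i j lam) = tau_rem n m i j (xmap n m lam)).
Proof.
split; first exact: xmap_outer_corner.
split; first exact: xmap_inner_corner.
split; first exact: xmap_t_add.
exact: xmap_t_rem.
Qed.
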